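(* Let $(G,k,M^*,M)$ be a critical tuple. Then $G_M$ contains no target set, i.e., there is no set $\mathcal{C}$ of directed cycles of $G_M$, each with $w_M(C)\le 0$, such that (a) every $e\in E^+(C^+)$ is contained in some cycle of $\mathcal{C}$; (b) for every $C\in\mathcal{C}$, $C\cap C^+$ is a single path; (c) every $e\in E^-(G_M)$ is contained in at most two cycles of $\mathcal{C}$.
   Context: $R(H)$ is the set of red edges of an edge set $H$. For a perfect matching $M$ of a red/blue edge-colored bipartite graph $G=(A\sqcup B,E)$, $G_M$ is the directed graph on $A\sqcup B$ with edges of $M$ oriented from $A$ to $B$ and other edges from $B$ to $A$, weighted by $w_M(e)=0$ for blue $e$, $-1$ for red $e\in M$, $+1$ for red $e\notin M$; for a subgraph $H$, $E^+(H)$ (resp. $E^-(H)$) is the set of red edges of $H$ not in $M$ (resp. in $M$), and $w_M(H)=|E^+(H)|-|E^-(H)|$. Cycles are identified with edge sets. For an edge $e$, $M^e$ is a perfect matching containing $e$ with the minimum number of red edges among those containing $e$. A tuple $(G,k,M^*,M)$ ($G$ red/blue bipartite, $k\ge0$ integer, $M^*,M$ perfect matchings) is critical if: every edge of $G$ lies in some perfect matching; $|R(M^* )|=k$; $|R(M)|<\frac13k$; every directed cycle $C$ of $G_M$ with $w_M(C)>0$ has $|E^+(C)|>\frac23k$; and $|R(M^e)|<\frac13k$ for every red $e\in M^*\setminus M$. For a critical tuple, $C^+$ denotes the unique directed cycle of $G_M$ contained in $M\Delta M^*$ with $w_M(C^+)>0$. *)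

From mathcomp Require Import all_boot all_order all_algebra.
Set Implicit Arguments. Unset Strict Implicit. Unset Printing Implicit Defensive.
Import GRing.Theory Num.Theory.

Section Defs.
Variables (A B : finType).
Implicit Types (E red M N H C P : {set A * B}).

(* G = (A ⊔ B, E) simple bipartite graph; an edge is a pair (a,b) in E.
   The red edges are those in [red]; all other edges are blue. *)

Definition R red H : {set A * B} := H :&: red.

Definition perfect_matching E N : Prop :=
  [/\ N \subset E,
      forall a : A, #|[set e in N | e.1 == a]| = 1
    & forall b : B, #|[set e in N | e.2 == b]| = 1].

Definition Eplus red M H : {set A * B} := (H :&: red) :\: M.
Definition Eminus red M H : {set A * B} := H :&: red :&: M.

Definition wM red M H : int := (#|Eplus red M H|%:Z - #|Eminus red M H|%:Z)%R.

Definition arc E M : rel (A + B) := fun u v =>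
  match u, v with
  | inl a, inr b => (a, b) \in M
  | inr b, inl a => ((a, b) \in E) && ((a, b) \notin M)
  | _, _ => false
  end.

Definition edge_of (u v : A + B) : option (A * B) :=
  match u, v with
  | inl a, inr b => Some (a, b)
  | inr b, inl a => Some (a, b)
  | _, _ => None
  end.

Definition cycle_edges (s : seq (A + B)) : {set A * B} :=
  [set e | has (fun x => edge_of x (next s x) == Some e) s].

Definition path_edges (x : A + B) (s : seq (A + B)) : {set A * B} :=
  [set e | has (fun p => edge_of p.1 p.2 == Some e) (zip (x :: s) s)].

Definition dicycle E M C : Prop :=
  exists s : seq (A + B),
    [/\ uniq s, 2 <= size s, cycle (arc E M) s & C = cycle_edges s].

Definition dipath E M P : Prop :=
  exists (x : A + B) (s : seq (A + B)),
    [/\ uniq (x :: s), path (arc E M) x s & P = path_edges x s].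

(* N is a possible choice of M^e: a perfect matching containing e with the
   minimum number of red edges among perfect matchings containing e *)
Definition is_Me E red (e : A * B) N : Prop :=
  [/\ perfect_matching E N, e \in N &
      forall N', perfect_matching E N' -> e \in N' -> #|R red N| <= #|R red N'|].

Definition critical E red (k : nat) (Mstar M : {set A * B}) : Prop :=
  [/\ perfect_matching E Mstar /\ perfect_matching E M,
      forall e, e \in E -> exists N, perfect_matching E N /\ e \in N,
      #|R red Mstar| = k,
      3 * #|R red M| < k /\
      (forall C, dicycle E M C -> (0 < wM red M C)%R -> 2 * k < 3 * #|Eplus red M C|)
    & forall e, e \in R red (Mstar :\: M) ->
        forall N, is_Me E red e N -> 3 * #|R red N| < k].

Definition target_set E red M (Cplus : {set A * B}) (Cs : {set {set A * B}}) : Prop :=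
  [/\ forall C, C \in Cs -> dicycle E M C /\ (wM red M C <= 0)%R,
      forall e, e \in Eplus red M Cplus -> exists2 C, C \in Cs & e \in C,
      forall C, C \in Cs -> dipath E M (C :&: Cplus)
    & forall e, e \in Eminus red M E -> #|[set C in Cs | e \in C]| <= 2].

End Defs.

From mathcomp Require Import all_boot all_order all_algebra.
From mathcomp Require Import zify.

Set Implicit Arguments.
Unset Strict Implicit.
Unset Printing Implicit Defensive.
Import GRing.Theory Num.Theory.

(* Double counting.  Every red edge of C^+ outside M lies on a cycle of the
   target set, and every cycle C of it has w_M(C) <= 0, i.e. |E^+(C)| <= |E^-(C)|.
   Hence |E^+(C^+)| <= sum_C |E^+(C)| <= sum_C |E^-(C)|, and the last sum counts
   every red edge of M at most twice, so |E^+(C^+)| <= 2 |R(M)| < 2k/3.  This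
   contradicts the criticality bound |E^+(C^+)| > 2k/3 for the positive cycle C^+. *)

Section IncidenceCounting.
Variable T : finType.
Implicit Types (F S : {set T}) (Cs : {set {set T}}).

Lemma sum_card_incident F Cs :
  \sum_(x in F) #|[set C in Cs | x \in C]| = \sum_(C in Cs) #|F :&: C|.
Proof.
have card_sep (U : finType) (X : {set U}) (P : pred U) :
    #|[set u in X | P u]| = \sum_(u in X) P u.
  rewrite -sum1_card big_mkcond [RHS]big_mkcond /=.
  by apply: eq_bigr => u _; rewrite inE; case: (u \in X); case: (P u).
under eq_bigr => x _ do rewrite card_sep.
rewrite exchange_big /=; apply: eq_bigr => C _.
by rewrite -card_sep; apply: eq_card => x; rewrite !inE.
Qed.

Lemma card_le_sum_cover S Cs :
    (forall x, x \in S -> exists2 C, C \in Cs & x \in C) ->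
  #|S| <= \sum_(C in Cs) #|S :&: C|.
Proof.
move=> covS; rewrite -sum_card_incident -sum1_card; apply: leq_sum => x Sx.
have [C CsC Cx] := covS x Sx.
by rewrite card_gt0; apply/set0Pn; exists C; rewrite inE CsC Cx.
Qed.

Lemma sum_card_le_degree F Cs d :
    (forall x, x \in F -> #|[set C in Cs | x \in C]| <= d) ->
  \sum_(C in Cs) #|F :&: C| <= #|F| * d.
Proof.
by move=> degF; rewrite -sum_card_incident -sum_nat_const; apply: leq_sum.
Qed.

End IncidenceCounting.

Section TargetSet.
Variables (A B : finType) (E red M : {set A * B}).
Implicit Types (H C : {set A * B}).

Lemma setI_Eplus_subset H C : Eplus red M H :&: C \subset Eplus red M C.
Proof.
by apply/subsetP => e; rewrite !inE => /andP[/andP[-> /andP[_ ->]] ->].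
Qed.

Lemma Eminus_subset_R H : Eminus red M H \subset R red M.
Proof. by apply/subsetP => e; rewrite !inE => /andP[/andP[_ ->] ->]. Qed.

Lemma Eminus_setIE C : M \subset E -> Eminus red M C = Eminus red M E :&: C.
Proof.
move=> /subsetP ME; apply/setP => e; rewrite !inE.
by case eM: (e \in M); rewrite ?andbF // (ME _ eM) !andbT andbC.
Qed.

Lemma wM_le0E C : (wM red M C <= 0)%R = (#|Eplus red M C| <= #|Eminus red M C|).
Proof. by rewrite /wM subr_le0 lez_nat. Qed.

Lemma target_set_Eplus_le Cplus Cs :
    M \subset E -> target_set E red M Cplus Cs ->
  #|Eplus red M Cplus| <= #|R red M| * 2.
Proof.
move=> ME [cycCs covCplus _ degEminus].
have sum_Eplus_le_Eminus :
    \sum_(C in Cs) #|Eplus red M C| <= \sum_(C in Cs) #|Eminus red M E :&: C|.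
  apply: leq_sum => C CsC; rewrite -Eminus_setIE // -wM_le0E.
  by have [_] := cycCs C CsC.
apply: leq_trans (card_le_sum_cover covCplus) _.
apply: (@leq_trans (\sum_(C in Cs) #|Eplus red M C|)).
  by apply: leq_sum => C _; apply/subset_leq_card/setI_Eplus_subset.
apply: leq_trans sum_Eplus_le_Eminus _.
apply: leq_trans (sum_card_le_degree degEminus) _.
by rewrite leq_mul2r subset_leq_card ?orbT // Eminus_subset_R.
Qed.

End TargetSet.

Theorem lemma3 (A B : finType) (E red : {set A * B}) (k : nat)
  (Mstar M : {set A * B}) :
  critical E red k Mstar M ->
  forall Cplus : {set A * B},
    dicycle E M Cplus ->
    Cplus \subset (M :\: Mstar) :|: (Mstar :\: M) ->
    (0 < wM red M Cplus)%R ->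
    ~ (exists Cs : {set {set A * B}}, target_set E red M Cplus Cs).
Proof.
move=> [[_ [ME _ _]] _ _ [few_red_M long_pos_cycles] _] Cplus cycCplus _ wpos.
move=> [Cs targetCs].
have := target_set_Eplus_le ME targetCs.
have := long_pos_cycles Cplus cycCplus wpos.
lia.
Qed.
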